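(* Let $\Gamma$ be a graph such that $\chi(\overline{\Gamma})=k$. Let $H$ be a graph and suppose $F$ is a bipartite graph on $k$ vertices which does not contain any graph in $\mathcal{F}_H$ as a subgraph. Then $\Gamma$ has a subgraph $G$ with at least $e(\Gamma)e(F)/\binom{k}{2}$ edges that does not contain $H$ as an induced subgraph.
   Context: For a graph $H$ and a vertex partition $V(H)=V_1\sqcup\dots\sqcup V_k$, the quotient graph is the graph on $\{1,\dots,k\}$ in which $i\ne j$ are adjacent if some vertex of $V_i$ is adjacent in $H$ to some vertex of $V_j$. If every $V_i$ is a clique in $H$, this is a clique quotient of $H$. $\mathcal{F}_H$ denotes the family of bipartite graphs that are clique quotients of $H$. $\overline{\Gamma}$ is the complement of $\Gamma$ and $\chi$ denotes chromatic number. *)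

From mathcomp Require Import all_boot all_order.
Set Implicit Arguments. Unset Strict Implicit. Unset Printing Implicit Defensive.

Definition simple_graph (T : finType) (e : rel T) : Prop :=
  symmetric e /\ irreflexive e.

Definition nedges (T : finType) (e : rel T) : nat :=
  #|[set p : T * T | e p.1 p.2]|./2.

Definition compl_graph (T : finType) (e : rel T) : rel T :=
  fun x y => (x != y) && ~~ e x y.

Definition colorable (T : finType) (e : rel T) (k : nat) : Prop :=
  exists f : T -> 'I_k, forall x y, e x y -> f x != f y.

Definition chromatic_number_eq (T : finType) (e : rel T) (k : nat) : Prop :=
  colorable e k /\ forall j, colorable e j -> k <= j.

Definition bipartite (T : finType) (e : rel T) : Prop :=
  exists b : T -> bool, forall x y, e x y -> b x != b y.

Definition contains_subgraph (T U : finType) (eF : rel T) (eQ : rel U) : Prop :=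
  exists phi : U -> T, injective phi /\ forall x y, eQ x y -> eF (phi x) (phi y).

(* vertex partition of H given by a surjective map p : W -> 'I_m (blocks
   p^-1(i), all nonempty) *)
Definition clique_partition (W : finType) (eH : rel W) (m : nat) (p : W -> 'I_m) : Prop :=
  (forall i : 'I_m, exists x, p x = i) /\
  (forall x y, x != y -> p x = p y -> eH x y).

Definition quotient_graph (W : finType) (eH : rel W) (m : nat) (p : W -> 'I_m) : rel 'I_m :=
  fun i j => (i != j) && [exists x, exists y, [&& p x == i, p y == j & eH x y]].

(* Q on 'I_m belongs to F_H (up to isomorphism): Q is a bipartite clique
   quotient of H. *)

Definition contains_induced (V W : finType) (S : {set V}) (eG : rel V) (eH : rel W) : Prop :=
  exists phi : W -> V, injective phi /\ (forall x, phi x \in S) /\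
    forall x y, eH x y = eG (phi x) (phi y).

From mathcomp Require Import all_boot all_order all_fingroup.
Set Implicit Arguments. Unset Strict Implicit. Unset Printing Implicit Defensive.

(* Colour V properly in k colours for the complement of Gamma, so that every
   colour class is a clique of Gamma.  For a permutation s of the colours keep
   the edges of Gamma inside colour classes, and the edges between classes i
   and j only when s i and s j are adjacent in F.  A random s keeps each edge
   between classes with probability e(F)/C(k,2), so some s keeps that many
   edges.  An induced copy of H in the kept graph is partitioned into cliques
   by the colouring, and s maps the quotient injectively into F, which is
   impossible by the hypothesis on F. *)

Definition arc_count (T : finType) (e : rel T) : nat := \sum_x \sum_y e x y.

Lemma card_arcs (T : finType) (e : rel T) :
  #|[set p : T * T | e p.1 p.2]| = arc_count e.
Proof.
rewrite cardsE -sum1_card big_mkcond /arc_count pair_big /=.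
by apply: eq_bigr => -[x y] _; rewrite unfold_in /=; case: (e x y).
Qed.

Lemma arc_count_nedges (T : finType) (e : rel T) :
  simple_graph e -> arc_count e = (nedges e).*2.
Proof.
case=> e_sym e_irr.
pose up x y := e x y && (enum_rank x < enum_rank y).
have split_arc x y : (e x y : nat) = up x y + up y x.
  rewrite /up (e_sym y x).
  case: (ltngtP (enum_rank x) (enum_rank y)) => [||/val_inj/enum_rank_inj ->].
  - by rewrite andbT andbF addn0.
  - by rewrite andbT andbF.
  by rewrite e_irr.
have arc_double : arc_count e = (\sum_x \sum_y (up x y : nat)).*2.
  rewrite /arc_count -addnn [X in _ + X]exchange_big -big_split /=.
  by apply: eq_bigr => x _; rewrite -big_split; apply: eq_bigr => y _; exact: split_arc.
by rewrite /nedges card_arcs arc_double doubleK.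
Qed.

Lemma arc_count_irr_le (T : finType) (e : rel T) :
  irreflexive e -> arc_count e <= #|T| * #|T|.-1.
Proof.
move=> e_irr; rewrite -sum_nat_const; apply: leq_sum => x _.
rewrite -(cardC1 x) -sum1_card [X in _ <= X]big_mkcond /=.
apply: leq_sum => y _; rewrite !inE eq_sym.
by case: eqP => [->|]; rewrite ?e_irr ?leq_b1.
Qed.

Lemma card_perm_type (T : finType) : #|{perm T}| = #|T|`!.
Proof.
rewrite -cardsT -card_perm; apply: eq_card => s.
rewrite inE unfold_in /perm_on; apply/esym/subsetP => x _; exact: in_setT.
Qed.

Lemma perm_map2 (T : finType) (i j a b : T) : i != j -> a != b ->
  exists t : {perm T}, t i = a /\ t j = b.
Proof.
move=> ij ab; pose t1 := tperm i a.
have t1j_a : t1 j != a.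
  by rewrite -[a](tpermL i a) (inj_eq perm_inj) eq_sym ij.
exists (t1 * tperm (t1 j) b)%g; rewrite !permM tpermL; split=> //.
by rewrite [t1 i]tpermL tpermD // eq_sym.
Qed.

Section PermutationAverage.

Variables (T : finType) (F : rel T).

Lemma sum_perm_pair_const (i j i' j' : T) : i != j -> i' != j' ->
  \sum_(s : {perm T}) F (s i) (s j) = \sum_(s : {perm T}) F (s i') (s j').
Proof.
move=> ij ij'; have [t [ti tj]] := perm_map2 ij' ij.
rewrite [RHS](reindex_inj (mulgI t)) /=.
by apply: eq_bigr => s _; rewrite !permM ti tj.
Qed.

Lemma sum_perm_arc_count :
  \sum_(s : {perm T}) arc_count (fun i j => F (s i) (s j)) = #|T|`! * arc_count F.
Proof.
rewrite -card_perm_type -sum_nat_const; apply: eq_bigr => s _.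
rewrite /arc_count (reindex_inj (@perm_inj _ s^-1)); apply: eq_bigr => i _.
rewrite (reindex_inj (@perm_inj _ s^-1)); apply: eq_bigr => j _.
by rewrite !permKV.
Qed.

Hypothesis F_irr : irreflexive F.

(* Both sides count the triples (s, i', j') with F (s i') (s j'): by
   sum_perm_pair_const each of the #|T| * #|T|.-1 pairs i' != j' contributes
   the left-hand sum. *)
Lemma sum_perm_edge (i j : T) : i != j ->
  #|T| * #|T|.-1 * \sum_(s : {perm T}) F (s i) (s j) = #|T|`! * arc_count F.
Proof.
move=> ij; rewrite -sum_perm_arc_count /arc_count exchange_big /=.
rewrite -sum_nat_const big_distrl; apply: eq_bigr => i' _.
under [RHS]eq_bigr => s _ do rewrite -/(arc_count _).
rewrite exchange_big /= -(cardC1 i') -sum1_card big_distrl /= big_mkcond /=.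
apply: eq_bigr => j' _; rewrite !inE eq_sym.
case: eqP => [->|/eqP i'j']; last by rewrite mul1n (sum_perm_pair_const ij i'j').
by rewrite [RHS]big1 // => s _; rewrite F_irr.
Qed.

Lemma perm_keeps_pair_often (a b : T) :
  #|T|`! * arc_count F <=
  #|T| * #|T|.-1 * \sum_(s : {perm T}) ((s a == s b) || F (s a) (s b)).
Proof.
have [<-|ab] := eqVneq a b.
  rewrite (eq_bigr (fun _ => 1)) => [|s _]; last by rewrite eqxx.
  by rewrite sum1_card card_perm_type mulnC leq_mul2r arc_count_irr_le ?orbT.
rewrite -(sum_perm_edge ab) leq_mul2l; apply/orP; right.
by apply: leq_sum => s _; rewrite (inj_eq perm_inj) (negbTE ab).
Qed.

End PermutationAverage.

Lemma exists_sum_le_card_mul (I : finType) (i0 : I) (f : I -> nat) :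
  exists i, \sum_j f j <= #|I| * f i.
Proof.
have I_gt0 : 0 < #|I| by apply/card_gt0P; exists i0.
have [i f_max] := eq_bigmax f I_gt0.
exists i; rewrite -f_max -sum_nat_const; apply: leq_sum => j _; exact: leq_bigmax.
Qed.

Definition colour_subgraph (V T : finType) (eGam : rel V) (eF : rel T) (f : V -> T) : rel V :=
  fun x y => eGam x y && ((f x == f y) || eF (f x) (f y)).

Lemma colour_subgraph_simple (V T : finType) (eGam : rel V) (eF : rel T) (f : V -> T) :
  simple_graph eGam -> symmetric eF -> simple_graph (colour_subgraph eGam eF f).
Proof.
case=> Gam_sym Gam_irr F_sym; split=> [x y|x]; rewrite /colour_subgraph.
  by rewrite Gam_sym eq_sym F_sym.
by rewrite Gam_irr.
Qed.

Lemma exists_large_colour_subgraph (V T : finType) (eGam : rel V) (eF : rel T)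
    (c : V -> T) : irreflexive eF ->
  exists s : {perm T},
    arc_count eGam * arc_count eF <=
    arc_count (colour_subgraph eGam eF (s \o c)) * (#|T| * #|T|.-1).
Proof.
move=> F_irr.
have sum_ge : #|T|`! * (arc_count eGam * arc_count eF) <=
    #|T| * #|T|.-1 * \sum_(s : {perm T}) arc_count (colour_subgraph eGam eF (s \o c)).
  rewrite mulnCA; set cF := _ * arc_count eF; rewrite /arc_count.
  rewrite big_distrl [X in _ <= _ * X]exchange_big big_distrr /=.
  apply: leq_sum => x _; rewrite big_distrl [X in _ <= _ * X]exchange_big big_distrr /=.
  apply: leq_sum => y _; rewrite /colour_subgraph /=.
  case: (eGam x y); last by rewrite mul0n.
  by rewrite mul1n; exact: perm_keeps_pair_often.
have [s s_max] := exists_sum_le_card_mul 1%g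
  (fun s : {perm T} => arc_count (colour_subgraph eGam eF (s \o c))).
exists s; rewrite -(@leq_pmul2l #|T|`!) ?fact_gt0 //.
apply: (leq_trans sum_ge); rewrite mulnC -card_perm_type [X in _ <= X]mulnA.
by rewrite leq_mul2r s_max orbT.
Qed.

Lemma compl_colouring_clique (V : finType) (T : eqType) (e : rel V) (c : V -> T) :
  (forall x y, compl_graph e x y -> c x != c y) ->
  forall x y, x != y -> c x = c y -> e x y.
Proof.
move=> c_proper x y xy cxy; apply/negPn/negP => nexy.
by have := c_proper x y; rewrite /compl_graph xy nexy cxy eqxx => /(_ isT).
Qed.

Lemma image_factorization (W : finType) (T : eqType) (g : W -> T) :
  exists m (p : W -> 'I_m) (h : 'I_m -> T),
    [/\ forall i, exists w, p w = i, injective h & forall w, h (p w) = g w].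
Proof.
pose s := undup [seq g w | w <- enum W].
have index_lt w : index (g w) s < size s by rewrite index_mem mem_undup map_f ?mem_enum.
exists (size s), (fun w => Ordinal (index_lt w)), (tnth (in_tuple s)); split.
- move=> i; have /mapP [w _ gw] : tnth (in_tuple s) i \in [seq g w | w <- enum W].
    by rewrite -mem_undup mem_tnth.
  by exists w; apply: val_inj; rewrite /= -gw (tnth_nth (g w)) index_uniq ?undup_uniq.
- by apply/tuple_uniqP; exact: undup_uniq.
- by move=> w; rewrite (tnth_nth (g w)) /= nth_index // -index_mem.
Qed.

Lemma bipartite_subgraph (T U : finType) (eF : rel T) (eQ : rel U) :
  contains_subgraph eF eQ -> bipartite eF -> bipartite eQ.
Proof. by case=> phi [_ phi_hom] [b b_ok]; exists (b \o phi) => x y /phi_hom /b_ok. Qed.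

Lemma induced_colour_subgraph_quotient (V T W : finType) (eGam : rel V) (eF : rel T)
    (f : V -> T) (eH : rel W) (phi : W -> V) :
  (forall x y, x != y -> f x = f y -> eGam x y) -> injective phi ->
  (forall x y, eH x y = colour_subgraph eGam eF f (phi x) (phi y)) ->
  exists m (p : W -> 'I_m),
    clique_partition eH p /\ contains_subgraph eF (quotient_graph eH p).
Proof.
move=> f_clique phi_inj phi_ind.
have [m [p [h [p_surj h_inj hp]]]] := image_factorization (f \o phi).
have {}hp w : h (p w) = f (phi w) := hp w.
exists m, p; split.
  split=> // x y xy pxy; have fxy : f (phi x) = f (phi y) by rewrite -!hp pxy.
  by rewrite phi_ind /colour_subgraph fxy eqxx f_clique // (inj_eq phi_inj).
exists h; split=> // i j /andP [ij /existsP [x /existsP [y /and3P [/eqP px /eqP py]]]].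
rewrite phi_ind /colour_subgraph -!hp px py (inj_eq h_inj) (negbTE ij).
by case/andP.
Qed.

Theorem lemma2p3 (V : finType) (eGam : rel V) (k : nat)
    (W : finType) (eH : rel W) (eF : rel 'I_k) :
  simple_graph eGam ->
  chromatic_number_eq (compl_graph eGam) k ->
  simple_graph eH ->
  simple_graph eF ->
  bipartite eF ->
  (forall (m : nat) (p : W -> 'I_m),
      clique_partition eH p -> bipartite (quotient_graph eH p) ->
      ~ contains_subgraph eF (quotient_graph eH p)) ->
  exists (S : {set V}) (eG : rel V),
    simple_graph eG /\
    (forall x y, eG x y -> [/\ x \in S, y \in S & eGam x y]) /\
    nedges eG * 'C(k, 2) >= nedges eGam * nedges eF /\
    ~ contains_induced S eG eH.
Proof.
move=> Gam_simple [[c c_proper] _] _ F_simple F_bip F_H_free.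
have [s s_large] := exists_large_colour_subgraph eGam c F_simple.2.
have G_simple := colour_subgraph_simple (s \o c) Gam_simple F_simple.1.
exists setT, (colour_subgraph eGam eF (s \o c)); split=> //.
split; first by move=> x y /andP [Gxy _]; rewrite !inE.
split.
  move: s_large; rewrite !arc_count_nedges // card_ord -[k.-1]bin1 mul_bin_diag.
  by rewrite -!mul2n mulnACA [X in _ <= X]mulnACA leq_pmul2l.
case=> phi [phi_inj [_ phi_ind]].
have sc_clique x y : x != y -> (s \o c) x = (s \o c) y -> eGam x y.
  by move=> xy /perm_inj; exact: compl_colouring_clique.
have [m [p [p_clique F_sub]]] := induced_colour_subgraph_quotient sc_clique phi_inj phi_ind.
exact: F_H_free m p p_clique (bipartite_subgraph F_sub F_bip) F_sub.
Qed.
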